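(* For every integer $n\ge 0$, there exist two DFAs, each with at most $n+1$ states, over an alphabet of cardinality $\frac{n(n+1)}{2}+1$, such that there is a tower of height $2^{n}$ between their languages and there is no infinite tower between their languages.
   Context: For strings $v=a_1\cdots a_k$ and $w$, $v\preccurlyeq w$ if $w\in\Sigma^*a_1\Sigma^*a_2\Sigma^*\cdots\Sigma^*a_k\Sigma^*$. A sequence $(w_i)_{i=1}^r$ of strings is a tower between languages $K$ and $L$ if $w_1\in K\cup L$ and for all $i=1,\dots,r-1$: $w_i\preccurlyeq w_{i+1}$, $w_i\in K$ implies $w_{i+1}\in L$, and $w_i\in L$ implies $w_{i+1}\in K$; $r$ is its height. An infinite tower is an infinite sequence with the same properties. *)

From mathcomp Require Import all_boot.
Set Implicit Arguments. Unset Strict Implicit. Unset Printing Implicit Defensive.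

Record dfa (Sigma : finType) := DFA {
  dstate : finType;
  dinit : dstate;
  ddelta : dstate -> Sigma -> dstate;
  dfinal : {set dstate}
}.

Definition dfa_lang (Sigma : finType) (A : dfa Sigma) : seq Sigma -> bool :=
  fun w => foldl (@ddelta _ A) (dinit A) w \in dfinal A.

(* The scattered-subword order v ≼ w is MathComp's [subseq v w]. *)

(* A tower (w_1,...,w_r) between K and L, indexed from 0: w 0, ..., w (r-1). *)
Definition is_tower (Sigma : eqType) (K L : seq Sigma -> bool)
  (r : nat) (w : nat -> seq Sigma) : Prop :=
  (0 < r -> K (w 0) || L (w 0)) /\
  (forall i, i.+1 < r ->
     [/\ subseq (w i) (w i.+1),
         (K (w i) -> L (w i.+1)) &
         (L (w i) -> K (w i.+1))]).

Definition is_infinite_tower (Sigma : eqType) (K L : seq Sigma -> bool)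
  (w : nat -> seq Sigma) : Prop :=
  (K (w 0) || L (w 0)) /\
  (forall i,
     [/\ subseq (w i) (w i.+1),
         (K (w i) -> L (w i.+1)) &
         (L (w i) -> K (w i.+1))]).

(* Letters carry levels 0, 1, 2, ...  Rank a word by a binary counter with
   n bits: if the top level n-1 occurs once, it contributes 2^(n-1) and the
   lower bits are computed on the prefix before that occurrence; if it occurs
   twice, the counter saturates at 2^n - 1.  This rank is monotone for the
   subword order, and an automaton with n+1 states (one of them a dead state)
   accepts exactly the words of even rank, while the same automaton with the
   dead state as only final state accepts those of odd rank.  Along a tower the
   parity alternates and the rank never decreases, so it increases strictly:
   every tower has height at most 2^n.  The suffixes of the ruler word
   0 1 0 2 0 1 0 ... realise all ranks, giving a tower of height 2^n. *)

From mathcomp Require Import all_boot zify.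
Set Implicit Arguments. Unset Strict Implicit. Unset Printing Implicit Defensive.

Lemma subseq_take_find (T : eqType) (p : pred T) (v w : seq T) :
  has p v -> count p w <= 1 -> subseq v w ->
  subseq (take (find p v) v) (take (find p w) w).
Proof.
elim: w v => [|z w IH] [|y v] //= v_p.
case pz: (p z) => /= w_p.
  case: eqP => [-> | _ /(leq_count_subseq p)]; first by rewrite pz.
  by move: v_p w_p; rewrite /= has_count add1n; lia.
case: eqP v_p => [-> | _ v_p yvw].
  by rewrite pz /= => v_p vw; rewrite /= eqxx; apply: IH.
apply: subseq_trans (subseq_cons _ z); exact: (IH (y :: v)).
Qed.

Section Counter.
Variable N : nat.

Definition at_level k : pred 'I_N := fun i => i == k :> nat.

Fixpoint counter k (w : seq 'I_N) : nat :=
  if k is k'.+1 then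
    match count (at_level k') w with
    | 0 => counter k' w
    | 1 => 2 ^ k' + counter k' (take (find (at_level k') w) w)
    | _ => 2 ^ k - 1
    end
  else 0.

Lemma counter_lt k w : counter k w < 2 ^ k.
Proof.
elim: k w => [|k IH] w //=; rewrite expnS.
case: (count _ w) => [|[|c]]; first by have := IH w; lia.
  by have := IH (take (find (at_level k) w) w); lia.
by have := expn_gt0 2 k; lia.
Qed.

Lemma counter_levelN k w : ~~ has (at_level k) w -> counter k.+1 w = counter k w.
Proof. by rewrite has_count -leqNgt leqn0 /= => /eqP ->. Qed.

Lemma counter_cat k u x v : at_level k x -> ~~ has (at_level k) u ->
  counter k.+1 (u ++ x :: v) =
  if has (at_level k) v then 2 ^ k.+1 - 1 else 2 ^ k + counter k u.
Proof.
move=> x_k u_k; have u0 : count (at_level k) u = 0.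
  by apply/eqP; rewrite -leqn0 leqNgt -has_count.
rewrite /= count_cat u0 /= x_k has_count find_cat (negbTE u_k) /= x_k addn0.
by rewrite take_size_cat //; case: (count _ v).
Qed.

Lemma counter_subseq k : {homo counter k : v w / subseq v w >-> v <= w}.
Proof.
elim: k => [|k IH] v w //= vw; have cvw := leq_count_subseq (at_level k) vw.
case cw: (count _ w) cvw => [|[|c]] cvw.
- by move: cvw; rewrite leqn0 => /eqP ->; apply: IH.
- case cv: (count _ v) cvw => [|[|]] // _.
    by have := IH _ _ vw; have := counter_lt k w; lia.
  rewrite leq_add2l; apply/IH/subseq_take_find => //; first by rewrite has_count cv.
  by rewrite cw.
- by have := counter_lt k.+1 v; rewrite /=; lia.
Qed.

End Counter.

Section Automaton.
Variables N m : nat.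

Definition dead : 'I_m.+1 := ord_max.

(* A live state records the largest level read so far; reading that level
   again kills the run.  Letters of level at least m are ignored. *)
Definition step (s : 'I_m.+1) (i : 'I_N) : 'I_m.+1 :=
  if (s == dead) || (m <= i) || (i < s) then s
  else if i == s :> nat then dead else inord i.

Notation run := (foldl step).

Lemma run_dead (w : seq 'I_N) : run dead w = dead.
Proof. by elim: w => //= i w IH; rewrite {2}/step eqxx. Qed.

Lemma run_stay (s : 'I_m.+1) (w : seq 'I_N) :
  s != dead -> {in w, forall i : 'I_N, i < m -> i < s} -> run s w = s.
Proof.
move=> s_live; elim: w => //= i w IH w_lt.
have -> : step s i = s.
  rewrite /step; case: (leqP m i) => i_m; rewrite ?orbT //.
  by rewrite w_lt ?mem_head ?orbT.
by apply: IH => j j_w; apply: w_lt; rewrite in_cons j_w orbT.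
Qed.

Lemma run_below k (s : 'I_m.+1) (w : seq 'I_N) :
  k <= m -> (s < k) || (s == dead) -> {in w, forall i : 'I_N, i < m -> i < k} ->
  (run s w < k) || (run s w == dead).
Proof.
move=> k_m; elim: w s => //= i w IH s s_k w_k.
apply: IH; last by move=> j j_w; apply: w_k; rewrite in_cons j_w orbT.
rewrite /step; case: (s =P dead) => [->|_] /=; first by rewrite eqxx orbT.
case: (leqP m i) => i_m //=; case: (ltnP i s) => //= s_i.
case: eqP => _; first by rewrite eqxx orbT.
by rewrite inordK ?w_k ?mem_head //; apply: ltnW.
Qed.

Lemma run_kill k (s : 'I_m.+1) (w : seq 'I_N) : s = k :> nat -> k < m ->
  {in w, forall i : 'I_N, i < m -> i <= k} -> has (at_level k) w -> run s w = dead.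
Proof.
move=> s_k k_m; have s_live : (s == dead) = false.
  by apply/negbTE/eqP => s_dead; move: s_k; rewrite s_dead /=; lia.
elim: w => //= i w IH w_k.
case i_k: (at_level k i) => /= w_lv.
  have -> : step s i = dead.
    by move: i_k => /eqP i_k; rewrite /step s_live i_k s_k ltnn leqNgt k_m /= eqxx.
  exact: run_dead.
have -> : step s i = s.
  rewrite /step s_live; case: (leqP m i) => i_m; rewrite ?orbT //.
  have : i <= k by apply: w_k; rewrite ?mem_head.
  rewrite leq_eqVlt => /orP [/eqP e|]; first by move: i_k; rewrite /at_level e eqxx.
  by rewrite s_k => ->; rewrite !orbT.
by apply: IH => // j j_w; apply: w_k; rewrite in_cons j_w orbT.
Qed.

Hypothesis m_pos : 0 < m.

Lemma start_live : (ord0 : 'I_m.+1) != dead.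
Proof. by apply/eqP => /(congr1 val) /=; lia. Qed.

Lemma below_levelN k (w : seq 'I_N) :
  {in w, forall i : 'I_N, i < m -> i < k.+1} -> ~~ has (at_level k) w ->
  {in w, forall i : 'I_N, i < m -> i < k}.
Proof.
move=> w_k /hasPn w_nk i i_w i_m; have := w_nk i i_w; rewrite /at_level.
by have := w_k i i_w i_m; lia.
Qed.

Lemma run_level_cat k (u : seq 'I_N) (x : 'I_N) (v : seq 'I_N) :
  k < m -> x = k :> nat ->
  {in u, forall i : 'I_N, i < m -> i < k} ->
  {in v, forall i : 'I_N, i < m -> i <= k} ->
  (run ord0 (u ++ x :: v) != dead) =
  [&& run ord0 u != dead, 0 < k & ~~ has (at_level k) v].
Proof.
move=> k_m x_k u_k v_k; rewrite foldl_cat /=; set s := run ord0 u.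
have k_val : (inord k : 'I_m.+1) = k :> nat by rewrite inordK //; lia.
have step_x : step s x = if (s != dead) && (0 < k) then inord k else dead.
  case: (posnP k) => [k0 | k_pos].
    have -> : s = ord0.
      by apply: run_stay => [|i i_u /(u_k i i_u)]; rewrite ?start_live ?k0.
    by rewrite /step andbF (negbTE start_live) x_k k0 leqn0 (gtn_eqF m_pos).
  have /orP [s_k | /eqP ->] : (s < k) || (s == dead).
    by apply: run_below; rewrite ?k_pos ?(ltnW k_m).
  - have s_live : s != dead by apply/eqP => /(congr1 val) /=; lia.
    rewrite /step (negbTE s_live) x_k leqNgt k_m ltnNge (ltnW s_k) /=.
    by rewrite (gtn_eqF s_k).
  - by rewrite /step eqxx.
rewrite step_x; case: ifP => [/andP [s_live k_pos] | s_dead].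
  rewrite s_live k_pos /=; case: (boolP (has (at_level k) v)) => [v_lv | v_nlv].
    by rewrite (@run_kill k) ?eqxx.
  have live_k : (inord k : 'I_m.+1) != dead by rewrite -(inj_eq val_inj) /= k_val; lia.
  by rewrite run_stay // k_val; apply: below_levelN.
by rewrite run_dead eqxx andbA s_dead.
Qed.

Lemma run_counter k (w : seq 'I_N) : k <= m ->
  {in w, forall i : 'I_N, i < m -> i < k} ->
  (run ord0 w != dead) = ~~ odd (counter k w).
Proof.
elim: k w => [|k IH] w k_m w_k; first by rewrite run_stay ?start_live.
case: (boolP (has (at_level k) w)) => [w_lv | w_nlv]; last first.
  by rewrite counter_levelN // IH ?(ltnW k_m) //; apply: below_levelN.
case/split_find: w_lv w_k => x u v x_k u_nlv; rewrite cat_rcons => w_k.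
have v_k : {in v, forall i : 'I_N, i < m -> i <= k}.
  by move=> i i_v; apply: w_k; rewrite mem_cat in_cons i_v !orbT.
have u_k : {in u, forall i : 'I_N, i < m -> i < k}.
  by apply: below_levelN => // i i_u; apply: w_k; rewrite mem_cat i_u.
rewrite counter_cat // (@run_level_cat k) //; last exact/eqP.
case: ifP => _; first by rewrite /= !andbF oddB ?expn_gt0 // oddX.
rewrite andbT oddD oddX orbF IH ?(ltnW k_m) //.
by case: (posnP k) => [-> | k_pos]; rewrite ?andbF ?andbT ?(gtn_eqF k_pos) //=; case: odd.
Qed.

Lemma run_live_even (w : seq 'I_N) : (run ord0 w != dead) = ~~ odd (counter m w).
Proof. exact: run_counter. Qed.

End Automaton.

Section Ruler.
Variable N : nat.

Fixpoint ruler k : seq 'I_N.+1 :=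
  if k is k'.+1 then ruler k' ++ inord k' :: ruler k' else [::].

Lemma size_ruler k : size (ruler k) = 2 ^ k - 1.
Proof.
elim: k => [|k IH] //=; rewrite size_cat /= IH expnS.
by have := expn_gt0 2 k; lia.
Qed.

Lemma ruler_lt k : k <= N.+1 -> {in ruler k, forall i : 'I_N.+1, i < k}.
Proof.
elim: k => [|k IH] //= k_N i; rewrite mem_cat in_cons => /or3P [i_r | /eqP -> | i_r].
- by apply: ltnW; apply: IH => //; apply: ltnW.
- by rewrite inordK.
- by apply: ltnW; apply: IH => //; apply: ltnW.
Qed.

Lemma ruler_levelN k j : k <= N.+1 -> ~~ has (at_level k) (drop j (ruler k)).
Proof.
move=> k_N; apply/hasPn => i /mem_drop /(ruler_lt k_N).
by rewrite /at_level ltn_neqAle => /andP [].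
Qed.

Lemma counter_drop_ruler k j : k <= N.+1 -> j < 2 ^ k ->
  counter k (drop j (ruler k)) = 2 ^ k - 1 - j.
Proof.
elim: k j => [|k IH] j k_N j_k; first by case: j j_k.
have k'_N := ltnW k_N; have e2 := expnS 2 k; have p2 : 0 < 2 ^ k by rewrite expn_gt0.
have x_k : at_level k (inord k : 'I_N.+1) by rewrite /at_level inordK.
have r_k := ruler_levelN 0 k'_N; rewrite drop0 in r_k.
rewrite [ruler _]/=; case: (ltnP j (2 ^ k)) => j_k'.
  have -> : drop j (ruler k ++ inord k :: ruler k) = drop j (ruler k) ++ inord k :: ruler k.
    rewrite drop_cat; case: ltnP => // j_r; have -> : j = size (ruler k).
      by move: j_r; rewrite size_ruler; lia.
    by rewrite subnn drop0 drop_size.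
  by rewrite counter_cat ?ruler_levelN // (negbTE r_k) IH //; lia.
rewrite drop_cat size_ruler ltnNge ifN; last by lia.
have -> : j - (2 ^ k - 1) = (j - 2 ^ k).+1 by lia.
by rewrite [drop _ _]/= counter_levelN ?ruler_levelN // IH //; lia.
Qed.

End Ruler.

Section ParityTowers.
Variables (T : eqType) (K L : seq T -> bool) (rank : seq T -> nat).
Hypotheses (K_even : forall w, K w = ~~ odd (rank w))
           (L_odd : forall w, L w = odd (rank w)).

Lemma parity_rank_tower r (c : nat -> seq T) :
  (forall i, i.+1 < r -> subseq (c i) (c i.+1)) ->
  (forall i, i < r -> rank (c i) = i) -> is_tower K L r c.
Proof.
move=> c_sub c_rank; split=> [_ | i i_r]; first by rewrite K_even L_odd orNb.
rewrite !K_even !L_odd !c_rank ?(ltnW i_r) //=.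
by split=> [| -> | ->]; rewrite ?c_sub.
Qed.

Lemma parity_rank_no_infinite_tower b :
  {homo rank : v w / subseq v w >-> v <= w} -> (forall w, rank w < b) ->
  ~ exists c, is_infinite_tower K L c.
Proof.
move=> rank_sub rank_b [c [_ c_tower]].
have rank_ge i : i <= rank (c i).
  elim: i => // i IH; have [c_sub K_L L_K] := c_tower i.
  have rank_neq : rank (c i) != rank (c i.+1).
    apply/eqP => e; move: K_L L_K; rewrite K_even L_odd L_odd K_even -e.
    by case: odd => [_ /(_ isT) | /(_ isT)].
  by apply: leq_ltn_trans IH _; rewrite ltn_neqAle rank_neq rank_sub.
by have := rank_ge b; have := rank_b (c b); lia.
Qed.

End ParityTowers.

Theorem theorem11 (n : nat) :
  exists A B : dfa 'I_((n * n.+1) %/ 2 + 1),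
    [/\ #|dstate A| <= n.+1,
        #|dstate B| <= n.+1,
        (exists w, is_tower (dfa_lang A) (dfa_lang B) (2 ^ n) w) &
        ~ (exists w, is_infinite_tower (dfa_lang A) (dfa_lang B) w)].
Proof.
case: n => [|n]; rewrite addn1.
  exists (DFA (ord0 : 'I_1) (fun s _ => s) setT), (DFA (ord0 : 'I_1) (fun s _ => s) set0).
  have K_even w : dfa_lang (DFA (ord0 : 'I_1) (fun s _ => s) setT) w = ~~ odd 0.
    by rewrite /dfa_lang inE.
  have L_odd w : dfa_lang (DFA (ord0 : 'I_1) (fun s _ => s) set0) w = odd 0.
    by rewrite /dfa_lang inE.
  split; rewrite ?card_ord //.
    by exists (fun=> [::]); apply: (@parity_rank_tower _ _ _ (fun=> 0)) => // -[].
  by apply: (@parity_rank_no_infinite_tower _ _ _ (fun=> 0) _ _ 1).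
set N := (n.+1 * n.+2) %/ 2; have n_N : n.+1 <= N.+1.
  by rewrite ltnS leq_divRL //; nia.
pose A := DFA (ord0 : 'I_n.+2) (@step N.+1 n.+1) [set s | s != dead n.+1].
pose B := DFA (ord0 : 'I_n.+2) (@step N.+1 n.+1) [set s | s == dead n.+1].
have A_even w : dfa_lang A w = ~~ odd (counter n.+1 w).
  by rewrite /dfa_lang inE run_live_even.
have B_odd w : dfa_lang B w = odd (counter n.+1 w).
  by rewrite /dfa_lang inE -[odd _]negbK -run_live_even ?negbK.
exists A, B; split; rewrite ?card_ord //; last first.
  exact: parity_rank_no_infinite_tower A_even B_odd _ (@counter_subseq _ _) (@counter_lt _ _).
exists (fun i => drop (2 ^ n.+1 - 1 - i) (ruler N n.+1)).
apply: (parity_rank_tower A_even B_odd) => i i_n.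
  have -> : 2 ^ n.+1 - 1 - i = 1 + (2 ^ n.+1 - 1 - i.+1) by lia.
  by rewrite -drop_drop drop_subseq.
by rewrite counter_drop_ruler //; lia.
Qed.
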